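(* Let $V$ be a nonempty finite set and let $B \subseteq \mathbb{Z}^V$ be a nonempty set satisfying ($\Delta$-EXC): for any $p, q \in B$ and any $u \in \operatorname{supp}(q-p)$, there exists $\alpha \in \Phi_B(p,q)$ with $u \in \operatorname{supp}(\alpha)$. Then $B$ is hole-free, i.e., $B = \operatorname{conv}(B) \cap \mathbb{Z}^V$.
   Context: For $t \in \mathbb{R}^V$, $\operatorname{supp}(t) = \{u \in V : t(u) \neq 0\}$; $\|p\|_1 = \sum_{u \in V}|p(u)|$; $\chi_u$ is the $u$-th unit vector; $\operatorname{conv}$ denotes convex hull. Let $\Phi = \{\pm \chi_u : u \in V\} \cup \{\pm\chi_u \pm \chi_v : u, v \in V, u \ne v\}$. For $p, q \in \mathbb{Z}^V$, $\Phi(p,q) = \{\alpha \in \Phi : \|q - (p+\alpha)\|_1 = \|q-p\|_1 - \|\alpha\|_1\}$, and for $B \subseteq \mathbb{Z}^V$ and $p,q \in B$, $\Phi_B(p,q) = \{\alpha \in \Phi(p,q) : p + \alpha \in B\}$. *)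

From HB Require Import structures.
From mathcomp Require Import all_boot all_order all_algebra.
From mathcomp Require Import reals.
Set Implicit Arguments. Unset Strict Implicit. Unset Printing Implicit Defensive.
Import Order.TTheory GRing.Theory Num.Theory.
Local Open Scope ring_scope.

Notation zvec V := {ffun V -> int}.

Definition supp (V : finType) (t : zvec V) : {set V} := [set u | t u != 0].

Definition norm1 (V : finType) (p : zvec V) : int := \sum_(u : V) `|p u|.

Definition chi (V : finType) (u : V) : zvec V := [ffun w => (w == u)%:Z].

Definition inPhi (V : finType) (a : zvec V) : Prop :=
  (exists u : V, a = chi u \/ a = - chi u) \/
  (exists u v : V, u != v /\ exists s t : int, (s = 1 \/ s = -1) /\ (t = 1 \/ t = -1)
       /\ a = chi u *~ s + chi v *~ t).

Definition Phi_pq (V : finType) (p q a : zvec V) : Prop :=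
  inPhi a /\ norm1 (q - (p + a)) = norm1 (q - p) - norm1 a.

Definition Phi_B (V : finType) (B : zvec V -> Prop) (p q a : zvec V) : Prop :=
  Phi_pq p q a /\ B (p + a).

Definition delta_exc (V : finType) (B : zvec V -> Prop) : Prop :=
  forall p q : zvec V, B p -> B q -> forall u : V, u \in supp (q - p) ->
    exists a : zvec V, Phi_B B p q a /\ u \in supp a.

Definition in_conv (R : realType) (V : finType) (B : zvec V -> Prop)
    (x : V -> R) : Prop :=
  exists (n : nat) (pts : 'I_n -> zvec V) (lam : 'I_n -> R),
    (forall i, B (pts i)) /\ (forall i, 0 <= lam i) /\ \sum_(i < n) lam i = 1 /\
    forall w : V, x w = \sum_(i < n) lam i * ((pts i w)%:~R).

Definition hole_free (R : realType) (V : finType) (B : zvec V -> Prop) : Prop :=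
  forall z : zvec V, B z <-> @in_conv R V B (fun w => (z w)%:~R).

From HB Require Import structures.
From mathcomp Require Import all_boot all_order all_algebra.
From mathcomp Require Import reals.
From mathcomp Require Import zify.
From Stdlib Require Import ClassicalEpsilon Classical.
Set Implicit Arguments. Unset Strict Implicit. Unset Printing Implicit Defensive.
Import Order.TTheory GRing.Theory Num.Theory.
Local Open Scope ring_scope.

(* Points of B lie in conv(B)
   trivially.  Conversely, let z be an integer point of conv(B) outside B and
   p a point of B nearest to z in l1 distance.  We build a sign vector
   s in {-1,0,1}^V with s(z - p) = ||z - p||_1 > 0 and s(q - p) <= 0 for all
   q in B; then the linear form s separates z from conv(B), a contradiction. *)

Lemma ffunMzE (V : finType) (f : zvec V) (g : int) x : (f *~ g) x = f x *~ g.
Proof.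
case: g => n /=; first by rewrite ffunMnE.
by rewrite !NegzE !mulrNz ffunE ffunMnE.
Qed.

Lemma chiZE (V : finType) (u x : V) (g : int) :
  (chi u *~ g) x = if x == u then g else 0.
Proof. rewrite ffunMzE /chi ffunE; case: (x == u) => /=; lia. Qed.

Lemma chiE (V : finType) (u w : V) : chi u w = if w == u then 1 else 0.
Proof. by rewrite /chi ffunE; case: eqP. Qed.

Lemma chi_neq0 (V : finType) (u w : V) : chi u w != 0 -> w = u.
Proof. by rewrite chiE; case: (w =P u) => [-> _ //| _]; rewrite eqxx. Qed.

Lemma zaddE (V : finType) (f h : zvec V) x : (f + h) x = f x + h x.
Proof. by rewrite ffunE. Qed.

Lemma zoppE (V : finType) (f : zvec V) x : (- f) x = - f x.
Proof. by rewrite !ffunE. Qed.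

Lemma zsubE (V : finType) (f h : zvec V) x : (f - h) x = f x - h x.
Proof. by rewrite !ffunE. Qed.

(* Proves an identity between integer vectors built from unit vectors by
   case analysis on the coordinate. *)
Ltac vec := apply/ffunP => ?; rewrite ?(zaddE, zsubE, zoppE, chiZE) /=;
  repeat (case: eqP => [?|?]); subst;
  try (match goal with H : is_true (?a != ?a) |- _ => by rewrite eqxx in H end);
  try (match goal with H : ?a <> ?a |- _ => by case: H end);
  try lia.

Ltac neqs := repeat match goal with
  | H : is_true (?a != ?b) |- context[?a == ?b] => rewrite (negbTE H)
  | H : is_true (?a != ?b) |- context[?b == ?a] => rewrite [b == a]eq_sym (negbTE H)
  end; rewrite ?eqxx.

Lemma chi2_supp (V : finType) (y u v : V) a b :
  (chi u *~ a + chi v *~ b) y != 0 -> y = u \/ y = v.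
Proof.
rewrite !zaddE !chiZE; case: (y =P u) => [->|_]; [by left|].
by case: (y =P v) => [->|_]; [by right|]; rewrite !addr0 eqxx.
Qed.

Lemma chi3_supp (V : finType) (y u v w : V) a b c :
  (chi u *~ a + chi v *~ b + chi w *~ c) y != 0 -> y = u \/ y = v \/ y = w.
Proof.
rewrite !zaddE !chiZE; case: (y =P u) => [->|_]; [by left|].
case: (y =P v) => [->|_]; [by right; left|].
by case: (y =P w) => [->|_]; [by right; right|]; rewrite !addr0 eqxx.
Qed.

Section ChiSums.
Variables (V : finType) (F : V -> int -> int).
Hypothesis F0 : forall x, F x 0 = 0.

Lemma sum_chi1 u a : \sum_x F x ((chi u *~ a) x) = F u a.
Proof.
rewrite (bigD1 u) //= chiZE eqxx big1 ?addr0 // => x /negbTE hx.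
by rewrite chiZE hx F0.
Qed.

Lemma sum_chi2 u v a b : u != v ->
  \sum_x F x ((chi u *~ a + chi v *~ b) x) = F u a + F v b.
Proof.
move=> uv; have vu : v != u by rewrite eq_sym.
rewrite (bigD1 u) //= (bigD1 v) //= big1 ?addr0.
  by rewrite !zaddE !chiZE; neqs; rewrite addr0 add0r.
by move=> x /andP [xu xv]; rewrite zaddE !chiZE; neqs; rewrite addr0 F0.
Qed.

Lemma sum_chi3 u v w a b c : u != v -> u != w -> v != w ->
  \sum_x F x ((chi u *~ a + chi v *~ b + chi w *~ c) x) = F u a + F v b + F w c.
Proof.
move=> uv uw vw; have vu : v != u by rewrite eq_sym.
have wu : w != u by rewrite eq_sym.
have wv : w != v by rewrite eq_sym.
rewrite (bigD1 u) //= (bigD1 v) //= (bigD1 w) /=; last by rewrite wu wv.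
rewrite big1 ?addr0.
  by rewrite !zaddE !chiZE; neqs; rewrite !addr0 !add0r addrA.
move=> x /andP [/andP [xu xv] xw].
by rewrite !zaddE !chiZE; neqs; rewrite !addr0 F0.
Qed.
End ChiSums.

Definition dot (V : finType) (s : V -> int) (a : zvec V) : int := \sum_x s x * a x.

Lemma dot_add (V : finType) (s : V -> int) a b : dot s (a + b) = dot s a + dot s b.
Proof. by rewrite /dot -big_split; apply: eq_bigr => x _; rewrite zaddE mulrDr. Qed.

Lemma dot_sub (V : finType) (s : V -> int) a b : dot s (a - b) = dot s a - dot s b.
Proof. by rewrite /dot -sumrB; apply: eq_bigr => x _; rewrite zsubE mulrBr. Qed.

Lemma dot_step (V : finType) (s : V -> int) w y e c : (c = 0 \/ y != w) ->
  dot s (chi w *~ e + chi y *~ c) = s w * e + s y * c.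
Proof.
have F0 x : s x * 0 = 0 by rewrite mulr0.
case=> [->|yw]; rewrite /dot.
  by rewrite mulr0z addr0 mulr0 addr0; exact: (sum_chi1 (F := fun x a => s x * a) F0).
by apply: (sum_chi2 (F := fun x a => s x * a)) => //; rewrite eq_sym.
Qed.

Lemma norm1_ge0 (V : finType) (a : zvec V) : 0 <= norm1 a.
Proof. by apply: sumr_ge0 => x _; exact: normr_ge0. Qed.

Lemma norm1_ge (V : finType) (x : zvec V) w : `|x w| <= norm1 x.
Proof. by rewrite /norm1 (bigD1 w) //= lerDl sumr_ge0. Qed.

Lemma norm1_eq0 (V : finType) (a : zvec V) : norm1 a = 0 -> a = 0.
Proof.
move=> a0; apply/ffunP => x; rewrite ffunE; apply/eqP; rewrite -normr_eq0.
by apply/eqP; apply: (psumr_eq0P (fun y _ => normr_ge0 (a y)) a0).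
Qed.

Lemma norm1N (V : finType) (a b : zvec V) : norm1 (a - b) = norm1 (b - a).
Proof. by apply: eq_bigr => x _; rewrite !zsubE -opprB normrN. Qed.

Lemma sg_unit (x : int) : x != 0 -> Num.sg x = 1 \/ Num.sg x = -1.
Proof. by move=> h; lia. Qed.

Lemma Phi_pq_conformal (V : finType) (a b al : zvec V) : Phi_pq a b al ->
  forall x, `|(b - a) x - al x| = `|(b - a) x| - `|al x|.
Proof.
case=> _ H.
have E : norm1 (b - a - al) = norm1 (b - a) - norm1 al.
  by rewrite -H; congr norm1; rewrite opprD addrA.
have gap0 : \sum_y (`|(b - a) y - al y| + `|al y| - `|(b - a) y|) = 0.
  rewrite !big_split /= sumrN.
  have -> : \sum_y `|(b - a) y - al y| = norm1 (b - a - al).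
    by apply: eq_bigr => y _; rewrite !ffunE.
  by rewrite E /norm1 subrK subrr.
have gap_ge0 y : predT y -> 0 <= `|(b - a) y - al y| + `|al y| - `|(b - a) y|.
  by move=> _; lia.
by move=> x; have := psumr_eq0P gap_ge0 gap0 (i:=x) isT; lia.
Qed.

Lemma conformal_unit_sign (D e : int) : (e = 1 \/ e = -1) ->
  `|D - e| = `|D| - `|e| -> e = Num.sg D /\ D != 0.
Proof. by move=> he h; split; [|apply/eqP]; lia. Qed.

Section Exchange.
Variables (V : finType) (B : zvec V -> Prop).
Hypothesis Hexc : delta_exc B.

(* Explicit form of (Delta-EXC): from a towards b through a coordinate w of
   b - a, one moves by sg((b-a) w) on w and possibly by sg((b-a) y) on one
   further coordinate y, strictly decreasing the distance to b. *)
Lemma exchange_toward (a b : zvec V) w : B a -> B b -> (b - a) w != 0 ->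
  exists y c, B (a + (chi w *~ Num.sg ((b - a) w) + chi y *~ c)) /\
    norm1 (b - (a + (chi w *~ Num.sg ((b - a) w) + chi y *~ c))) < norm1 (b - a) /\
    (c = 0 \/ (y != w /\ (b - a) y != 0 /\ c = Num.sg ((b - a) y))).
Proof.
move=> Ba Bb hw.
have [al [[Hphi Bal] Hwal]] : exists al, Phi_B B a b al /\ w \in supp al.
  by apply: Hexc => //; rewrite inE.
move: Hwal; rewrite inE => Hwal.
have Hc := Phi_pq_conformal Hphi.
have Hn : norm1 (b - (a + al)) < norm1 (b - a).
  rewrite Hphi.2 ltrBlDr ltrDl; apply: (lt_le_trans _ (norm1_ge al w)).
  by rewrite normr_gt0.
suff [y [c [Eal Hyc]]] : exists y c,
    al = chi w *~ Num.sg ((b - a) w) + chi y *~ c /\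
    (c = 0 \/ (y != w /\ (b - a) y != 0 /\ c = Num.sg ((b - a) y))).
  by exists y, c; rewrite -Eal.
move: hw Hc; generalize (b - a) => D hw Hc.
case: Hphi.1 => [[u [Eal|Eal]]|[u [v [Huv [s1 [t1 [Hs [Ht Eal]]]]]]]];
  rewrite Eal in Hwal Hc.
- have wu := chi_neq0 Hwal; subst u.
  have := Hc w; rewrite chiE eqxx => /(conformal_unit_sign (or_introl erefl)) [<- _].
  exists w, 0; split; last by left.
  by rewrite Eal; apply/ffunP => x; rewrite zaddE !chiZE ?chiE; case: eqP => /=; lia.
- have wu : w = u by apply: chi_neq0; move: Hwal; rewrite zoppE oppr_eq0.
  subst u; have := Hc w; rewrite zoppE chiE eqxx /=.
  move=> /(conformal_unit_sign (or_intror erefl)) [<- _].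
  exists w, 0; split; last by left.
  by rewrite Eal; apply/ffunP => x; rewrite zaddE !chiZE ?zoppE ?chiE; case: eqP => /= _; lia.
- move: Hwal; rewrite zaddE !chiZE.
  case: (eqVneq w u) => [wu|wu].
  + subst u; rewrite (negbTE Huv) addr0 => _.
    have := Hc w; rewrite zaddE !chiZE eqxx (negbTE Huv) addr0.
    move=> /(conformal_unit_sign Hs) [Es _].
    have := Hc v; rewrite zaddE !chiZE eqxx eq_sym (negbTE Huv) add0r.
    move=> /(conformal_unit_sign Ht) [Et Dv].
    by exists v, t1; rewrite Eal -Es; split => //; right; split => //; rewrite eq_sym.
  + case: (eqVneq w v) => [wv|wv]; last by rewrite addr0.
    subst v => _.
    have := Hc w; rewrite zaddE !chiZE eqxx (negbTE wu) add0r.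
    move=> /(conformal_unit_sign Ht) [Et _].
    have := Hc u; rewrite zaddE !chiZE eqxx (negbTE Huv) addr0.
    move=> /(conformal_unit_sign Hs) [Es Du].
    by exists u, s1; rewrite Eal -Et addrC; split => //; right.
Qed.
End Exchange.

Section Nearest.
Variables (V : finType) (B : zvec V -> Prop).
Hypothesis Hexc : delta_exc B.
Variables z p : zvec V.
Hypothesis Bp : B p.
Hypothesis p_nearest : forall x, B x -> norm1 (z - p) <= norm1 (z - x).

Definition dir (u : V) : int := Num.sg ((z - p) u).

Definition dgain (x : V) (a : int) : int := `|(z - p) x - a| - `|(z - p) x|.

Lemma dgain0 x : dgain x 0 = 0.
Proof. by rewrite /dgain subr0 subrr. Qed.

Lemma dist_shift al : norm1 (z - (p + al)) = norm1 (z - p) + \sum_x dgain x (al x).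
Proof.
rewrite /norm1 -big_split /=; apply: eq_bigr => x _.
by rewrite /dgain !zsubE zaddE; lia.
Qed.

Lemma nearest_shift al : B (p + al) -> 0 <= \sum_x dgain x (al x).
Proof. by move/p_nearest; rewrite dist_shift; lia. Qed.

Lemma nearest1 u a : B (p + chi u *~ a) -> 0 <= dgain u a.
Proof. by move/nearest_shift; rewrite (sum_chi1 dgain0). Qed.

Lemma nearest2 u v a b : u != v ->
  B (p + (chi u *~ a + chi v *~ b)) -> 0 <= dgain u a + dgain v b.
Proof. by move=> uv /nearest_shift; rewrite (sum_chi2 dgain0). Qed.

Lemma nearest3 u v w a b c : u != v -> u != w -> v != w ->
  B (p + (chi u *~ a + chi v *~ b + chi w *~ c)) ->
  0 <= dgain u a + dgain v b + dgain w c.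
Proof. by move=> uv uw vw /nearest_shift; rewrite (sum_chi3 dgain0). Qed.

Lemma dir_unit x : (z - p) x != 0 -> dir x = 1 \/ dir x = -1.
Proof. exact: sg_unit. Qed.

Lemma sg_dir x : (z - p) x != 0 -> Num.sg (dir x) = dir x.
Proof. by rewrite /dir => h; lia. Qed.

Lemma dgain_supp x a : (z - p) x != 0 -> (a = 1 \/ a = -1) -> dgain x a = - (dir x * a).
Proof. by rewrite /dgain /dir => h [->|->]; lia. Qed.

Lemma dgain_dir x : (z - p) x != 0 -> dgain x (dir x) = -1.
Proof. by move=> h; rewrite dgain_supp //; [case: (dir_unit h) => ->|exact: dir_unit]. Qed.

Lemma dgain_off x a : (z - p) x = 0 -> dgain x a = `|a|.
Proof. by rewrite /dgain => ->; lia. Qed.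

Lemma supp_off_neq u v : (z - p) u != 0 -> (z - p) v = 0 -> u != v.
Proof. by move=> hu hv; apply/eqP => E; move: hu; rewrite E hv eqxx. Qed.

(* In the lemmas below u, u' lie in the support of z - p and v, w outside it;
   each configuration of points of B is refuted (or turned into a new point of
   B) by one exchange followed by the nearness of p. *)

Lemma no_opposite_pair_at u v t : (z - p) u != 0 -> (z - p) v = 0 -> (t = 1 \/ t = -1) ->
  B (p + (chi u *~ dir u + chi v *~ t)) -> B (p + (chi u *~ dir u + chi v *~ (-t))) -> False.
Proof.
move=> hu hv ht Ba Bb.
have uv := supp_off_neq hu hv.
have Eba : p + (chi u *~ dir u + chi v *~ (-t)) - (p + (chi u *~ dir u + chi v *~ t)) =
  chi v *~ (- (t + t)) by vec.
have := exchange_toward Hexc Ba Bb (w := v); rewrite Eba chiZE eqxx.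
case=> [|y [c [By [_ Hc]]]]; first by apply/eqP; lia.
have c0 : c = 0.
  by case: Hc => // [[yv [Hy _]]]; move: Hy; rewrite chiZE (negbTE yv) eqxx.
subst c.
have E : p + (chi u *~ dir u + chi v *~ t) + (chi v *~ Num.sg (- (t + t)) + chi y *~ 0) =
  p + chi u *~ dir u by vec.
by rewrite E in By; have := nearest1 By; rewrite dgain_dir.
Qed.

Lemma no_opposite_pair u u' v t :
  (z - p) u != 0 -> (z - p) u' != 0 -> (z - p) v = 0 -> (t = 1 \/ t = -1) ->
  B (p + (chi u *~ dir u + chi v *~ t)) -> B (p + (chi u' *~ dir u' + chi v *~ (-t))) -> False.
Proof.
move=> hu hu' hv ht Ba Bb.
case: (eqVneq u u') => [E|uu']; first by subst u'; exact: no_opposite_pair_at hu hv ht Ba Bb.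
have uv := supp_off_neq hu hv; have u'v := supp_off_neq hu' hv.
have vu' : v != u' by rewrite eq_sym.
have gu := dir_unit hu; have gu' := dir_unit hu'.
have Eba : p + (chi u' *~ dir u' + chi v *~ (-t)) - (p + (chi u *~ dir u + chi v *~ t)) =
  chi u' *~ dir u' + chi u *~ (- dir u) + chi v *~ (- (t + t)) by vec.
have := exchange_toward Hexc Ba Bb (w := u'); rewrite Eba.
have -> : (chi u' *~ dir u' + chi u *~ (- dir u) + chi v *~ (- (t + t))) u' = dir u'.
  by rewrite !zaddE !chiZE; neqs; rewrite ?add0r ?addr0.
rewrite sg_dir //.
case=> [|y [c [By [_ Hc]]]]; first by apply/eqP; lia.
case: Hc => [c0|[yu' [Hy Ec]]].
- subst c.
  have E : p + (chi u *~ dir u + chi v *~ t) + (chi u' *~ dir u' + chi y *~ 0) =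
    p + (chi u *~ dir u + chi v *~ t + chi u' *~ dir u') by vec.
  rewrite E in By; have := nearest3 uv uu' vu' By.
  by rewrite dgain_dir // dgain_off // dgain_dir //; lia.
- case: (chi3_supp Hy) => [yu2|[yu|yv]]; first by move: yu'; rewrite yu2 eqxx.
  + subst y; move: Ec; rewrite !zaddE !chiZE; neqs; rewrite ?add0r ?addr0 => Ec.
    have E : p + (chi u *~ dir u + chi v *~ t) + (chi u' *~ dir u' + chi u *~ c) =
      p + (chi u' *~ dir u' + chi v *~ t) by rewrite Ec; vec.
    by rewrite E in By; exact: no_opposite_pair_at hu' hv ht By Bb.
  + subst y; move: Ec; rewrite !zaddE !chiZE; neqs; rewrite ?add0r ?addr0 => Ec.
    have E : p + (chi u *~ dir u + chi v *~ t) + (chi u' *~ dir u' + chi v *~ c) =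
      p + (chi u *~ dir u + chi u' *~ dir u') by rewrite Ec; vec.
    by rewrite E in By; have := nearest2 uu' By; rewrite !dgain_dir //; lia.
Qed.

Lemma no_single_opposite u v t : (z - p) u != 0 -> (z - p) v = 0 -> (t = 1 \/ t = -1) ->
  B (p + chi v *~ t) -> B (p + (chi u *~ dir u + chi v *~ (-t))) -> False.
Proof.
move=> hu hv ht Ba Bb.
have uv := supp_off_neq hu hv; have gu := dir_unit hu.
have Eba : p + (chi u *~ dir u + chi v *~ (-t)) - (p + chi v *~ t) =
  chi u *~ dir u + chi v *~ (- (t + t)) by vec.
have := exchange_toward Hexc Ba Bb (w := u); rewrite Eba.
have -> : (chi u *~ dir u + chi v *~ (- (t + t))) u = dir u.
  by rewrite !zaddE !chiZE; neqs; rewrite ?add0r ?addr0.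
rewrite sg_dir //.
case=> [|y [c [By [_ Hc]]]]; first by apply/eqP; lia.
case: Hc => [c0|[yu [Hy Ec]]].
- subst c.
  have E : p + chi v *~ t + (chi u *~ dir u + chi y *~ 0) =
    p + (chi u *~ dir u + chi v *~ t) by vec.
  by rewrite E in By; exact: (no_opposite_pair hu hu hv ht By Bb).
- case: (chi2_supp Hy) => [yu2|yv]; first by move: yu; rewrite yu2 eqxx.
  subst y; move: Ec; rewrite !zaddE !chiZE; neqs; rewrite ?add0r ?addr0 => Ec.
  have E : p + chi v *~ t + (chi u *~ dir u + chi v *~ c) = p + chi u *~ dir u.
    by rewrite Ec; vec.
  by rewrite E in By; have := nearest1 By; rewrite dgain_dir.
Qed.

Definition mixed (x : V) (t : int) : Prop :=
  exists u, (z - p) u != 0 /\ B (p + (chi u *~ dir u + chi x *~ t)).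

(* Auxiliary case of mixed_transfer: the three-coordinate point obtained
   there, exchanged back towards p + dir u chi_u - t chi_v, makes w mixed. *)
Lemma mixed_of_triple u v w t t' :
  (z - p) u != 0 -> (z - p) v = 0 -> (z - p) w = 0 -> v != w ->
  (t = 1 \/ t = -1) -> (t' = 1 \/ t' = -1) ->
  B (p + (chi u *~ dir u + chi v *~ t + chi w *~ t')) ->
  B (p + (chi u *~ dir u + chi v *~ (-t))) -> mixed w t'.
Proof.
move=> hu hv hw vw ht ht' Bt Bm.
have uv := supp_off_neq hu hv; have uw := supp_off_neq hu hw.
have Emr : p + (chi u *~ dir u + chi v *~ (-t)) -
    (p + (chi u *~ dir u + chi v *~ t + chi w *~ t')) =
  chi v *~ (- (t + t)) + chi w *~ (- t') by vec.
have := exchange_toward Hexc Bt Bm (w := v); rewrite Emr.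
have -> : (chi v *~ (- (t + t)) + chi w *~ (- t')) v = - (t + t).
  by rewrite !zaddE !chiZE; neqs; rewrite ?add0r ?addr0.
case=> [|y [c [By [_ Hc]]]]; first by apply/eqP; lia.
case: Hc => [c0|[yv [Hy Ec]]].
- subst c; exists u; split => //.
  have E : p + (chi u *~ dir u + chi v *~ t + chi w *~ t') +
      (chi v *~ Num.sg (- (t + t)) + chi y *~ 0) =
    p + (chi u *~ dir u + chi w *~ t') by vec.
  by rewrite -E.
- case: (chi2_supp Hy) => [yv2|yw]; first by move: yv; rewrite yv2 eqxx.
  subst y; move: Ec; rewrite !zaddE !chiZE; neqs; rewrite ?add0r ?addr0 => Ec.
  have E : p + (chi u *~ dir u + chi v *~ t + chi w *~ t') +
      (chi v *~ Num.sg (- (t + t)) + chi w *~ c) = p + chi u *~ dir u.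
    by rewrite Ec; vec.
  by rewrite E in By; have := nearest1 By; rewrite dgain_dir.
Qed.

Lemma mixed_transfer u v w t t' :
  (z - p) u != 0 -> (z - p) v = 0 -> (z - p) w = 0 -> v != w ->
  (t = 1 \/ t = -1) -> (t' = 1 \/ t' = -1) ->
  B (p + (chi v *~ t + chi w *~ t')) -> B (p + (chi u *~ dir u + chi v *~ (-t))) ->
  mixed w t'.
Proof.
move=> hu hv hw vw ht ht' Bc Bm.
have uv := supp_off_neq hu hv; have uw := supp_off_neq hu hw.
have gu := dir_unit hu.
have Emc : p + (chi u *~ dir u + chi v *~ (-t)) - (p + (chi v *~ t + chi w *~ t')) =
  chi u *~ dir u + chi v *~ (- (t + t)) + chi w *~ (- t') by vec.
have := exchange_toward Hexc Bc Bm (w := u); rewrite Emc.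
have -> : (chi u *~ dir u + chi v *~ (- (t + t)) + chi w *~ (- t')) u = dir u.
  by rewrite !zaddE !chiZE; neqs; rewrite ?add0r ?addr0.
rewrite sg_dir //.
case=> [|y [c [By [_ Hc]]]]; first by apply/eqP; lia.
case: Hc => [c0|[yu [Hy Ec]]].
- subst c.
  have E : p + (chi v *~ t + chi w *~ t') + (chi u *~ dir u + chi y *~ 0) =
    p + (chi u *~ dir u + chi v *~ t + chi w *~ t') by vec.
  by rewrite E in By; exact: mixed_of_triple hu hv hw vw ht ht' By Bm.
- case: (chi3_supp Hy) => [yu2|[yv|yw]]; first by move: yu; rewrite yu2 eqxx.
  + subst y; move: Ec; rewrite !zaddE !chiZE; neqs; rewrite ?add0r ?addr0 => Ec.
    exists u; split => //.
    have E : p + (chi v *~ t + chi w *~ t') + (chi u *~ dir u + chi v *~ c) =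
      p + (chi u *~ dir u + chi w *~ t') by rewrite Ec; vec.
    by rewrite -E.
  + subst y; move: Ec; rewrite !zaddE !chiZE; neqs; rewrite ?add0r ?addr0 => Ec.
    have E : p + (chi v *~ t + chi w *~ t') + (chi u *~ dir u + chi w *~ c) =
      p + (chi u *~ dir u + chi v *~ t) by rewrite Ec; vec.
    by rewrite E in By; case: (no_opposite_pair hu hu hv ht By Bm).
Qed.

(* The separating sign vector: sg(z - p) on the support of z - p; off it,
   the sign opposite to the one in which the coordinate is mixed (well defined
   by no_opposite_pair), and 0 if it is not mixed at all. *)
Definition sepsign (x : V) : int :=
  if (z - p) x != 0 then dir x
  else if excluded_middle_informative (mixed x 1) then -1
  else if excluded_middle_informative (mixed x (-1)) then 1 else 0.

Lemma sepsign_range x : sepsign x = 1 \/ sepsign x = 0 \/ sepsign x = -1.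
Proof.
rewrite /sepsign; case: ifP => [h|_]; first by case: (dir_unit h) => ->; auto.
by case: excluded_middle_informative => ?; [|case: excluded_middle_informative => ?]; auto.
Qed.

Lemma sepsign_supp x : (z - p) x != 0 -> sepsign x = dir x.
Proof. by rewrite /sepsign => ->. Qed.

Lemma sepsign_mixed x t : (z - p) x = 0 -> (t = 1 \/ t = -1) -> mixed x t -> sepsign x = - t.
Proof.
move=> hx ht M; rewrite /sepsign hx eqxx /=.
case: excluded_middle_informative => [[u [hu Bu]]|nM1].
  case: ht => Et; subst t => //; case: M => u' [hu' Bu'].
  by case: (no_opposite_pair hu hu' hx (or_introl erefl) Bu Bu').
case: ht => Et; subst t => //.
by case: excluded_middle_informative.
Qed.

Lemma mixed_of_sepsign x e : (z - p) x = 0 -> (e = 1 \/ e = -1) ->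
  sepsign x * e = 1 -> mixed x (- e).
Proof.
move=> hx he; rewrite /sepsign hx eqxx /=.
case: excluded_middle_informative => [M|nM] /= H; first by have -> : - e = 1 by lia.
move: H; case: excluded_middle_informative => [M|nM'] /= H; last by lia.
by have -> : - e = -1 by lia.
Qed.

Lemma step_sign_mixed w y e c : (z - p) w != 0 -> (z - p) y = 0 ->
  (e = 1 \/ e = -1) -> (c = 1 \/ c = -1) ->
  B (p + (chi w *~ e + chi y *~ c)) -> sepsign w * e + sepsign y * c <= 0.
Proof.
move=> hw hy he hc Bwy.
have := nearest2 (supp_off_neq hw hy) Bwy.
rewrite dgain_supp // dgain_off // sepsign_supp //.
have [H1|H1] : dir w * e = 1 \/ dir w * e = -1.
  by case: (dir_unit hw) => ->; case: he => ->; auto.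
- have Ee : e = dir w by case: (dir_unit hw) => E; rewrite E in H1 *; lia.
  have M : mixed y c by exists w; split => //; rewrite -Ee.
  by rewrite (sepsign_mixed hy hc M) H1; case: hc => ->; lia.
- by rewrite H1; case: (sepsign_range y) => [->|[->|->]]; case: hc => ->; lia.
Qed.

Lemma step_sign_off w y e c : y != w -> (z - p) w = 0 -> (z - p) y = 0 ->
  (e = 1 \/ e = -1) -> (c = 1 \/ c = -1) ->
  B (p + (chi w *~ e + chi y *~ c)) -> sepsign w * e + sepsign y * c <= 0.
Proof.
move=> yw hw hy he hc Bwy.
have Byw : B (p + (chi y *~ c + chi w *~ e)) by rewrite [chi y *~ c + _]addrC.
have wy : w != y by rewrite eq_sym.
have [Hw|Hw] : sepsign w * e = 1 \/ sepsign w * e <= 0.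
  by case: (sepsign_range w) => [->|[->|->]]; case: he => ->; lia.
  have [u [hu Bu]] := mixed_of_sepsign hw he Hw.
  have M := mixed_transfer hu hw hy wy he hc Bwy Bu.
  by rewrite Hw (sepsign_mixed hy hc M); case: hc => ->; lia.
have [Hy|Hy] : sepsign y * c = 1 \/ sepsign y * c <= 0.
  by case: (sepsign_range y) => [->|[->|->]]; case: hc => ->; lia.
  have [u [hu Bu]] := mixed_of_sepsign hy hc Hy.
  have M := mixed_transfer hu hy hw yw hc he Byw Bu.
  by rewrite Hy (sepsign_mixed hw he M); case: he => ->; lia.
by lia.
Qed.

Lemma step_sign w y e c : (e = 1 \/ e = -1) -> (c = 0 \/ (y != w /\ (c = 1 \/ c = -1))) ->
  B (p + (chi w *~ e + chi y *~ c)) -> sepsign w * e + sepsign y * c <= 0.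
Proof.
move=> he [c0|[yw hc]] Bwy.
  subst c; rewrite mulr0 addr0; move: Bwy; rewrite mulr0z addr0 => Bw.
  case: (eqVneq ((z - p) w) 0) => hw; last first.
    by have := nearest1 Bw; rewrite dgain_supp // sepsign_supp //; lia.
  case: (lerP (sepsign w * e) 0) => // H.
  have H1 : sepsign w * e = 1.
    by case: (sepsign_range w) => E; rewrite ?E in H *; case: he => Ee; rewrite Ee in H *; lia.
  have [u [hu Bu]] := mixed_of_sepsign hw he H1.
  by case: (no_single_opposite hu hw he Bw Bu).
have wy : w != y by rewrite eq_sym.
case: (eqVneq ((z - p) w) 0) => hw; case: (eqVneq ((z - p) y) 0) => hy.
- exact: step_sign_off.
- by rewrite addrC; apply: step_sign_mixed => //; rewrite [chi y *~ c + _]addrC.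
- exact: step_sign_mixed.
- by have := nearest2 wy Bwy; rewrite !dgain_supp // !sepsign_supp //; lia.
Qed.

(* If sepsign were positive on q - p for some q in B, exchanging from p
   towards q and then from q back towards p produces a point of B closer to p
   on which sepsign is still positive. *)
Lemma sepsign_descent q : B q -> 0 < dot sepsign (q - p) ->
  exists q', B q' /\ norm1 (q' - p) < norm1 (q - p) /\ 0 < dot sepsign (q' - p).
Proof.
move=> Bq Hpos.
have [w Hw] : exists w, 0 < sepsign w * (q - p) w.
  case: (boolP [exists w, 0 < sepsign w * (q - p) w]) => [/existsP //|/existsPn Hall].
  have : dot sepsign (q - p) <= 0 by apply: sumr_le0 => x _; rewrite leNgt; exact: Hall.
  by rewrite leNgt Hpos.
have hw : (q - p) w != 0 by apply/eqP => E; move: Hw; rewrite E mulr0 ltxx.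
have Esw : sepsign w * Num.sg ((q - p) w) = 1.
  by case: (sepsign_range w) => [E|[E|E]]; rewrite E in Hw *; lia.
have [y [c [By [_ Hc]]]] := exchange_toward Hexc Bp Bq hw.
have Hce : c = 0 \/ (y != w /\ (c = 1 \/ c = -1)).
  by case: Hc => [->|[yw [hy ->]]]; [left|right; split => //; exact: sg_unit].
have := step_sign (sg_unit hw) Hce By; rewrite Esw => Hyc.
case: Hc => [c0|[yw [hy Ec]]]; first by subst c; move: Hyc; rewrite mulr0; lia.
have hy' : (p - q) y != 0 by rewrite -opprB zoppE oppr_eq0.
have Esy : sepsign y * Num.sg ((p - q) y) = 1.
  rewrite -opprB zoppE; subst c; move: Hyc hy.
  by case: ((q - p) y) => k Hyc hy; case: (sepsign_range y) => [E|[E|E]]; rewrite E in Hyc *; lia.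
have [y' [c' [Bq' [Hlt Hc']]]] := exchange_toward Hexc Bq Bp hy'.
have Hy'y : c' = 0 \/ y' != y by case: Hc' => [->|[? _]]; [left|right].
have Hc'r : -1 <= sepsign y' * c'.
  case: Hc' => [->|[_ [hy2 ->]]]; first by rewrite mulr0.
  by case: (sepsign_range y') => [->|[->|->]]; case: (sg_unit hy2) => ->.
exists (q + (chi y *~ Num.sg ((p - q) y) + chi y' *~ c')); split => //; split.
  by move: Hlt; rewrite norm1N [norm1 (q - p)]norm1N.
rewrite addrAC dot_add dot_step // Esy.
by move: Hc'r Hpos; set d := dot _ _; set s' := sepsign y' * c'; lia.
Qed.

Lemma sepsign_nonpos q : B q -> dot sepsign (q - p) <= 0.
Proof.
have [n] := ubnP (absz (norm1 (q - p))); elim: n q => // n IH q Hn Bq.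
rewrite leNgt; apply/negP => Hpos.
have [q' [Bq' [Hlt Hpos']]] := sepsign_descent Bq Hpos.
have : dot sepsign (q' - p) <= 0.
  by apply: IH Bq'; have := norm1_ge0 (q' - p); lia.
by rewrite leNgt Hpos'.
Qed.

Lemma sepsign_gap : dot sepsign (z - p) = norm1 (z - p).
Proof.
apply: eq_bigr => x _; rewrite /sepsign.
case: ifP => [h|/negbFE/eqP ->]; last by rewrite mulr0 normr0.
by rewrite /dir; move: h; case: ((z - p) x) => k h; lia.
Qed.
End Nearest.

Lemma exists_minimizer (T : Type) (P : T -> Prop) (f : T -> nat) : (exists x, P x) ->
  exists x, P x /\ forall y, P y -> (f x <= f y)%N.
Proof.
move=> [x Px]; have [n] := ubnP (f x); elim: n x Px => // n IH x Px Hx.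
case: (classic (exists y, P y /\ (f y < f x)%N)) => [[y [Py Hy]]|Hno].
  by apply: (IH y Py); apply: leq_trans Hy _; rewrite -ltnS.
exists x; split => // y Py; rewrite leqNgt; apply/negP => Hy; apply: Hno; by exists y.
Qed.

Lemma exists_nearest (V : finType) (B : zvec V -> Prop) (z : zvec V) : (exists p, B p) ->
  exists p, B p /\ forall x, B x -> norm1 (z - p) <= norm1 (z - x).
Proof.
move=> /(exists_minimizer (fun x => absz (norm1 (z - x)))) [p [Bp Hmin]].
exists p; split => // x Bx; have := Hmin x Bx.
by rewrite -lez_nat !abszE !ger0_norm ?norm1_ge0.
Qed.

Lemma mem_conv (R : realType) (V : finType) (B : zvec V -> Prop) (z : zvec V) :
  B z -> in_conv B (fun w => (z w)%:~R : R).
Proof.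
move=> Bz; exists 1%N, (fun _ => z), (fun _ => 1); split => //; split => [_|].
  exact: ler01.
by split => [|w]; rewrite big_ord1 ?mul1r.
Qed.

Lemma conv_dot_le (R : realType) (V : finType) (B : zvec V -> Prop) (s : V -> int)
    (c : int) (z : zvec V) :
  in_conv B (fun w => (z w)%:~R : R) -> (forall q, B q -> dot s q <= c) -> dot s z <= c.
Proof.
move=> [n [pts [lam [Hpts [Hlam [Hsum Hz]]]]]] Hc.
rewrite -(ler_int R) /dot (big_morph _ (intrD _) (mulr0z 1)).
under eq_bigr => x _ do rewrite intrM Hz mulr_sumr.
rewrite exchange_big /=.
apply: (@le_trans _ _ (\sum_(i < n) lam i * c%:~R)); last by rewrite -mulr_suml Hsum mul1r.
apply: ler_sum => i _.
have -> : \sum_x (s x)%:~R * (lam i * (pts i x)%:~R) = lam i * (dot s (pts i))%:~R.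
  rewrite /dot (big_morph _ (intrD _) (mulr0z 1)) mulr_sumr.
  by apply: eq_bigr => x _; rewrite intrM mulrCA.
by apply: ler_wpM2l; [exact: Hlam | rewrite ler_int; exact: Hc].
Qed.

Theorem mainTheorem3 (R : realType) (V : finType) (B : zvec V -> Prop) :
  (exists v : V, True) -> (exists p, B p) -> delta_exc B -> @hole_free R V B.
Proof.
move=> _ HB Hexc z; split; first exact: mem_conv.
move=> zconv; apply: NNPP => nBz.
have [p [Bp p_nearest]] := exists_nearest z HB.
pose s := sepsign B z p.
have zp : 0 < norm1 (z - p).
  rewrite lt_def norm1_ge0 andbT; apply/eqP => /norm1_eq0 /eqP.
  by rewrite subr_eq0 => /eqP zp; apply: nBz; rewrite zp.
have Hs : forall q, B q -> dot s q <= dot s p.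
  by move=> q Bq; rewrite -subr_le0 -dot_sub; exact: sepsign_nonpos.
have := conv_dot_le zconv Hs.
by rewrite -subr_le0 -dot_sub sepsign_gap; lia.
Qed.
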